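(* Let $LS(n,k)$ be defined by $LS(0,0)=1$, $LS(n,k)=0$ if $k<0$ or $k>n$ (and $LS(n,k)=0$ for $n<0$), and $$LS(n,k)=(k^2+k)\,LS(n-1,k)+LS(n-1,k-1)\qquad (n\ge 1).$$ Then for every $n\ge 0$ the sequence $(LS(n,k))_{k}$ is log-concave in $k$.
   Context: A sequence $(a_k)$ is log-concave if $a_k^2\ge a_{k-1}a_{k+1}$ for all $k$. *)

From mathcomp Require Import all_boot.
Set Implicit Arguments. Unset Strict Implicit. Unset Printing Implicit Defensive.

(* LS n k for n, k naturals; negative k gives 0 by convention (handled by
   the k = 0 case of the recursion: LS(n-1, -1) = 0). *)
Fixpoint LS (n k : nat) : nat :=
  match n with
  | 0 => if k == 0 then 1 else 0
  | n'.+1 => (k ^ 2 + k) * LS n' k + (if k is k'.+1 then LS n' k' else 0)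
  end.

(* log-concavity of a nat-indexed sequence, with a_(-1) = 0 (so the k = 0
   instance is trivial and is omitted). *)
Definition log_concave (a : nat -> nat) : Prop :=
  forall k, a k * a k.+2 <= a k.+1 ^ 2.

(** The recursion is handled through the stronger inequality
    [(k+3) a_k a_(k+2) <= (k+1) a_(k+1)^2], i.e. log-concavity of
    [k! (k+1)! a_k], which does propagate through
    [a'_(k+1) = ((k+1)^2 + (k+1)) a_(k+1) + a_k].  Besides the two
    neighbouring instances of the hypothesis, the inductive step needs the
    "gap two" inequality [(k+3)(k+4) a_k a_(k+3) <= (k+1)(k+2) a_(k+1) a_(k+2)],
    their product after cancelling [a_(k+1) a_(k+2)]; this cancellation is
    legitimate because the rows of [LS] have no internal zeros. *)
From mathcomp Require Import all_boot zify.
From mathcomp Require Import ring.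

Definition weighted_log_concave (a : nat -> nat) : Prop :=
  forall k, k.+3 * a k * a k.+2 <= k.+1 * a k.+1 ^ 2.

Definition no_internal_zeros (a : nat -> nat) : Prop :=
  forall i j k, i <= j <= k -> 0 < a i -> 0 < a k -> 0 < a j.

Lemma weighted_log_concave_log_concave a :
  weighted_log_concave a -> log_concave a.
Proof.
move=> wlc k; rewrite -(leq_pmul2l (ltn0Sn k)) mulnA.
apply: leq_trans (wlc k); rewrite !leq_mul2r.
by rewrite (leqW (leqnSn k.+1)) !orbT.
Qed.

Lemma weighted_log_concave_gap a k :
  no_internal_zeros a -> weighted_log_concave a ->
  k.+3 * k.+4 * a k * a k.+3 <= k.+1 * k.+2 * a k.+1 * a k.+2.
Proof.
move=> nz wlc.
have [a0|apos] := posnP (a k); first by rewrite a0 !(muln0, mul0n).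
have [d0|dpos] := posnP (a k.+3); first by rewrite d0 muln0.
have bpos : 0 < a k.+1 by apply: (nz k _ k.+3) => //; lia.
have cpos : 0 < a k.+2 by apply: (nz k _ k.+3) => //; lia.
rewrite -(@leq_pmul2l (a k.+1 * a k.+2)) ?muln_gt0 ?bpos //.
have prod := leq_mul (wlc k) (wlc k.+1).
apply: leq_trans (leq_trans prod _); apply/eq_leq; ring.
Qed.

Lemma weighted_log_concave_step k a b c d :
  k.+2 * a * c <= k * b ^ 2 ->
  k.+3 * b * d <= k.+1 * c ^ 2 ->
  k.+2 * k.+3 * a * d <= k * k.+1 * b * c ->
  k.+3 * ((k ^ 2 + k) * b + a) * ((k.+2 ^ 2 + k.+2) * d + c)
    <= k.+1 * ((k.+1 ^ 2 + k.+1) * c + b) ^ 2.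
Proof.
move=> abc bcd abcd.
set X := (k ^ 2 + k) * (k.+2 ^ 2 + k.+2).
rewrite -(@leq_pmul2l k.+2) //.
(* Both sides expand into the same four-term combination of the three
   hypotheses, the right side carrying in addition a square. *)
have ->: k.+2 * (k.+3 * ((k ^ 2 + k) * b + a) * ((k.+2 ^ 2 + k.+2) * d + c)) =
  k.+2 * X * (k.+3 * b * d) + k.+2 * k.+3 * (k ^ 2 + k) * b * c
  + (k.+2 ^ 2 + k.+2) * (k.+2 * k.+3 * a * d) + k.+3 * (k.+2 * a * c).
  by rewrite /X; ring.
have ->: k.+2 * (k.+1 * ((k.+1 ^ 2 + k.+1) * c + b) ^ 2) =
  k.+2 * X * (k.+1 * c ^ 2) + k.+2 * k.+3 * (k ^ 2 + k) * b * c
  + (k.+2 ^ 2 + k.+2) * (k * k.+1 * b * c) + k.+3 * (k * b ^ 2)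
  + 2 * (k.+1 * k.+2 * c + b) ^ 2.
  by rewrite /X; ring.
apply: leq_trans (leq_addr _ _).
by rewrite !leq_add // leq_mul.
Qed.

Lemma LS_gt0 n k : (0 < LS n k) = (k <= n) && ((0 < k) || (n == 0)).
Proof.
elim: n k => [|n IH] [|k] //=.
by rewrite addn_gt0 muln_gt0 !IH; lia.
Qed.

Lemma LS_no_internal_zeros n : no_internal_zeros (LS n).
Proof. move=> i j k /andP[ij jk]; rewrite !LS_gt0; lia. Qed.

Lemma LS_weighted_log_concave n : weighted_log_concave (LS n).
Proof.
elim: n => [|n IH] [|k] /=.
- by rewrite muln0.
- by rewrite muln0.
- by rewrite exp0n // !mul0n.
- apply: weighted_log_concave_step (IH k) (IH k.+1) _.
  exact: weighted_log_concave_gap (LS_no_internal_zeros n) IH.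
Qed.

Theorem mainTheorem6 : forall n : nat, log_concave (LS n).
Proof.
move=> n; exact: weighted_log_concave_log_concave (LS_weighted_log_concave n).
Qed.
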